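(* Let $a<b$ be real numbers, let the outcome set be $\Omega=[a,b]$ and the forecast set $\Gamma$ be the set of all probability distribution functions on $[a,b]$, and let the loss be the continuous ranked probability score $$\mathrm{CRPS}(F,y)=\int_a^b (F(u)-H(u-y))^2\,du,$$ where $H(x)=0$ for $x<0$ and $H(x)=1$ for $x\ge0$. Then $\mathrm{CRPS}$ is $\frac{2}{b-a}$-mixable. Moreover, for any $N\ge1$, any probability distribution functions $F_1,\dots,F_N\in\Gamma$ and any probability vector $\mathbf{q}=(q_1,\dots,q_N)$ ($q_i\ge0$, $\sum_i q_i=1$), the function $$F(u)=\frac{1}{2}-\frac{1}{4}\ln\frac{\sum_{i=1}^N q_i e^{-2(F_i(u))^2}}{\sum_{i=1}^N q_i e^{-2(1-F_i(u))^2}},\qquad u\in[a,b],$$ is a probability distribution function and satisfies, for all $y\in[a,b]$, $$e^{-\frac{2}{b-a}\mathrm{CRPS}(F,y)}\ge\sum_{i=1}^N q_i\, e^{-\frac{2}{b-a}\mathrm{CRPS}(F_i,y)}.$$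
   Context: A probability distribution function on $[a,b]$ is a non-decreasing function $F:[a,b]\to[0,1]$ with $F(a)=0$, $F(b)=1$, left-continuous and having a right limit at each point. A loss function $\lambda:\Gamma\times\Omega\to\mathbb{R}$ is $\eta$-mixable ($\eta>0$) if for every $N$, every probability vector $\mathbf{q}=(q_1,\dots,q_N)$ and every $c_1,\dots,c_N\in\Gamma$ there exists $f\in\Gamma$ with $\lambda(f,y)\le-\frac{1}{\eta}\ln\sum_{i=1}^N q_i e^{-\eta\lambda(c_i,y)}$ for all $y\in\Omega$. *)

From Stdlib Require Import Reals.
From Coquelicot Require Import Coquelicot.
Open Scope R_scope.

Fixpoint rsum (N : nat) (f : nat -> R) : R :=
  match N with
  | O => 0
  | S n => rsum n f + f n
  end.

Definition prob_vec (N : nat) (q : nat -> R) : Prop :=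
  (forall i, (i < N)%nat -> 0 <= q i) /\ rsum N q = 1.

(* probability distribution function on [a,b] (only values on [a,b] matter) *)
Definition is_pdf (a b : R) (F : R -> R) : Prop :=
  (forall u, a <= u <= b -> 0 <= F u <= 1) /\
  (forall u v, a <= u -> u <= v -> v <= b -> F u <= F v) /\
  F a = 0 /\ F b = 1 /\
  (forall x, a < x <= b -> filterlim F (at_left x) (locally (F x))) /\
  (forall x, a <= x < b -> exists l, filterlim F (at_right x) (locally l)).

Definition mixable {G O : Type} (isG : G -> Prop) (isO : O -> Prop)
  (lam : G -> O -> R) (eta : R) : Prop :=
  forall (N : nat) (q : nat -> R) (c : nat -> G),
    prob_vec N q -> (forall i, (i < N)%nat -> isG (c i)) ->
    exists f, isG f /\
      forall y, isO y ->
        lam f y <= - / eta * ln (rsum N (fun i => q i * exp (- eta * lam (c i) y))).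

Definition Heav (x : R) : R := if Rlt_dec x 0 then 0 else 1.

Definition CRPS (a b : R) (F : R -> R) (y : R) : R :=
  RInt (fun u => (F u - Heav (u - y)) ^ 2) a b.

Definition Fmix (N : nat) (q : nat -> R) (Fs : nat -> R -> R) (u : R) : R :=
  / 2 - / 4 * ln (rsum N (fun i => q i * exp (-2 * (Fs i u) ^ 2))
                  / rsum N (fun i => q i * exp (-2 * (1 - Fs i u) ^ 2))).

(* For a binary outcome h in {0, 1}, the square loss (x - h)^2 is 2-mixable with substitution
   function f = 1/2 - 1/4 ln (A / B), A = sum_i q_i e^(-2 x_i^2), B = sum_i q_i e^(-2 (1 - x_i)^2):
   f balances e^(2 f^2) A = e^(2 (1 - f)^2) B, and Hoeffding's lemma bounds this common value by 1.
   The CRPS of F at y is the integral over u of the square loss of F(u) against the binary outcome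
   H(u - y), and the mixture forecast applies the substitution function pointwise in u.  Averaging
   the pointwise inequality over [a, b] costs the factor b - a in the learning rate, by Jensen's
   inequality for the convex function z |-> ln sum_i q_i e^(z_i) (integrated tangent plane).
   The substitution function is nondecreasing and continuous in each x_i and reproduces unanimous
   forecasts, so the mixture is again a probability distribution function. *)

From Stdlib Require Import Reals Lra Lia ClassicalEpsilon.
From Coquelicot Require Import Coquelicot.
Open Scope R_scope.

Lemma rsum_ext N f g : (forall i, (i < N)%nat -> f i = g i) -> rsum N f = rsum N g.
Proof.
  induction N as [|N IH]; intros Hfg; simpl; [reflexivity|].
  rewrite IH, (Hfg N); [reflexivity | lia | intros; apply Hfg; lia].
Qed.

Lemma rsum_plus N f g : rsum N (fun i => f i + g i) = rsum N f + rsum N g.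
Proof. induction N as [|N IH]; simpl; [lra|]. rewrite IH. ring. Qed.

Lemma rsum_scal N c f : rsum N (fun i => c * f i) = c * rsum N f.
Proof. induction N as [|N IH]; simpl; [lra|]. rewrite IH. ring. Qed.

Lemma rsum_le N f g : (forall i, (i < N)%nat -> f i <= g i) -> rsum N f <= rsum N g.
Proof.
  induction N as [|N IH]; intros Hfg; simpl; [lra|].
  assert (f N <= g N) by (apply Hfg; lia).
  assert (rsum N f <= rsum N g) by (apply IH; intros; apply Hfg; lia).
  lra.
Qed.

Lemma rsum_nonneg N f : (forall i, (i < N)%nat -> 0 <= f i) -> 0 <= rsum N f.
Proof.
  intros Hf. replace 0 with (rsum N (fun _ => 0)) by (clear Hf; induction N; simpl; lra).
  now apply rsum_le.
Qed.

Lemma rsum_mult_pos N q w :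
  (forall i, (i < N)%nat -> 0 <= q i) -> (forall i, (i < N)%nat -> 0 < w i) ->
  0 < rsum N q -> 0 < rsum N (fun i => q i * w i).
Proof.
  induction N as [|N IH]; intros Hq Hw Hsum; simpl in *; [lra|].
  assert (0 <= q N) by (apply Hq; lia).
  assert (0 < w N) by (apply Hw; lia).
  assert (0 <= rsum N (fun i => q i * w i)).
  { apply rsum_nonneg; intros i Hi.
    apply Rmult_le_pos; [|apply Rlt_le]; [apply Hq | apply Hw]; lia. }
  assert (0 <= rsum N q) by (apply rsum_nonneg; intros; apply Hq; lia).
  destruct (Req_dec (rsum N q) 0) as [Hz|Hnz].
  - assert (0 < q N * w N) by (apply Rmult_lt_0_compat; lra). lra.
  - assert (0 < rsum N (fun i => q i * w i)) by (apply IH; intros; try lra; [apply Hq|apply Hw]; lia).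
    assert (0 <= q N * w N) by (apply Rmult_le_pos; lra). lra.
Qed.

Lemma jensen_exp N p z : (forall i, (i < N)%nat -> 0 <= p i) -> rsum N p = 1 ->
  exp (rsum N (fun i => p i * z i)) <= rsum N (fun i => p i * exp (z i)).
Proof.
  intros Hp Hsum. set (m := rsum N (fun i => p i * z i)).
  (* tangent line of exp at the mean m *)
  assert (Htan : rsum N (fun i => p i * (exp m * (1 + (z i - m)))) <= rsum N (fun i => p i * exp (z i))).
  { apply rsum_le; intros i Hi. apply Rmult_le_compat_l; [now apply Hp|].
    replace (exp (z i)) with (exp m * exp (z i - m)) by (rewrite <- exp_plus; f_equal; ring).
    apply Rmult_le_compat_l; [apply Rlt_le, exp_pos | apply exp_ineq1_le]. }
  rewrite (rsum_ext N _ (fun i => (exp m * (1 - m)) * p i + exp m * (p i * z i))) in Htan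
    by (intros; ring).
  rewrite rsum_plus, !rsum_scal, Hsum in Htan. fold m in Htan. lra.
Qed.

Lemma exp_le_exp x y : x <= y -> exp x <= exp y.
Proof. intros [Hlt|Heq]; [apply Rlt_le, exp_increasing, Hlt | rewrite Heq; apply Rle_refl]. Qed.

Lemma ln_le_iff_le_exp x y : 0 < x -> (ln x <= y <-> x <= exp y).
Proof.
  intros Hx. split; intros H.
  - rewrite <- (exp_ln x) by exact Hx. now apply exp_le_exp.
  - rewrite <- (ln_exp y). now apply ln_le.
Qed.

Definition mix_exp N (q z : nat -> R) : R := rsum N (fun i => q i * exp (z i)).

Lemma mix_exp_pos N q z : prob_vec N q -> 0 < mix_exp N q z.
Proof. intros [Hq Hsum]. apply rsum_mult_pos; auto; [intros; apply exp_pos | lra]. Qed.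

Lemma mix_exp_ext N q z w : (forall i, (i < N)%nat -> z i = w i) -> mix_exp N q z = mix_exp N q w.
Proof. intros Hzw. apply rsum_ext; intros i Hi. now rewrite Hzw. Qed.

Lemma mix_exp_le N q z w : prob_vec N q -> (forall i, (i < N)%nat -> z i <= w i) ->
  mix_exp N q z <= mix_exp N q w.
Proof.
  intros [Hq _] Hzw. apply rsum_le; intros i Hi.
  apply Rmult_le_compat_l; [now apply Hq|]. apply exp_le_exp, Hzw, Hi.
Qed.

Lemma mix_exp_shift N q z c : mix_exp N q (fun i => z i + c) = exp c * mix_exp N q z.
Proof.
  unfold mix_exp. rewrite <- rsum_scal. apply rsum_ext; intros.
  rewrite exp_plus. ring.
Qed.

Lemma mix_exp_const N q c : prob_vec N q -> mix_exp N q (fun _ => c) = exp c.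
Proof.
  intros [_ Hsum]. unfold mix_exp.
  rewrite (rsum_ext N _ (fun i => exp c * q i)), rsum_scal, Hsum by (intros; ring). ring.
Qed.

Lemma ln_mix_exp_tangent N q c z : (forall i, (i < N)%nat -> 0 <= q i) -> 0 < mix_exp N q c ->
  ln (mix_exp N q c)
  + rsum N (fun i => q i * exp (c i) / mix_exp N q c * (z i - c i))
  <= ln (mix_exp N q z).
Proof.
  intros Hq HS. set (S := mix_exp N q c) in *.
  set (p := fun i => q i * exp (c i) / S).
  assert (Hp : forall i, (i < N)%nat -> 0 <= p i).
  { intros i Hi. unfold p. apply Rdiv_le_0_compat; [|exact HS].
    apply Rmult_le_pos; [now apply Hq | apply Rlt_le, exp_pos]. }
  assert (Hp1 : rsum N p = 1).
  { unfold p. rewrite (rsum_ext N _ (fun i => / S * (q i * exp (c i)))), rsum_scal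
      by (intros; unfold Rdiv; ring).
    fold (mix_exp N q c). fold S. field. lra. }
  assert (Hmix : rsum N (fun i => p i * exp (z i - c i)) = mix_exp N q z / S).
  { unfold Rdiv, mix_exp. rewrite Rmult_comm, <- rsum_scal. apply rsum_ext; intros i Hi.
    unfold p. unfold Rminus. rewrite exp_plus, exp_Ropp.
    pose proof (exp_pos (c i)). field. lra. }
  assert (Hpos : 0 < mix_exp N q z / S).
  { rewrite <- Hmix. apply rsum_mult_pos; auto; [intros; apply exp_pos | lra]. }
  pose proof (jensen_exp N p (fun i => z i - c i) Hp Hp1) as HJ. cbv beta in HJ. rewrite Hmix in HJ.
  apply ln_le in HJ; [|apply exp_pos]. rewrite ln_exp in HJ.
  assert (Hz : 0 < mix_exp N q z).
  { unfold Rdiv in Hpos. apply Rmult_lt_reg_r with (/ S); [apply Rinv_0_lt_compat|]; lra. }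
  rewrite ln_div in HJ by lra. unfold p in HJ. lra.
Qed.

Lemma mvt_from_zero (f df : R -> R) : (forall s, is_derive f s (df s)) ->
  forall s, exists c, 0 <= c * s /\ f s - f 0 = df c * s.
Proof.
  intros Hf s.
  destruct (MVT_gen f 0 s df) as [c [Hc Hmvt]].
  - intros x _. apply Hf.
  - intros x _. apply derivable_continuous_pt.
    exists (df x). apply is_derive_Reals, Hf.
  - exists c. rewrite Rminus_0_r in Hmvt. split; [|exact Hmvt].
    revert Hc. unfold Rmin, Rmax. destruct (Rle_dec 0 s); intros; nra.
Qed.

Lemma convex_flat_nonneg (f df d2f : R -> R) :
  (forall s, is_derive f s (df s)) -> (forall s, is_derive df s (d2f s)) ->
  (forall s, 0 <= d2f s) -> f 0 = 0 -> df 0 = 0 -> forall s, 0 <= f s.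
Proof.
  intros Hf Hdf Hd2f Hf0 Hdf0.
  assert (Hsign : forall s, 0 <= s * df s).
  { intros s. destruct (mvt_from_zero df d2f Hdf s) as [c [_ Hc]].
    pose proof (Hd2f c). rewrite Hdf0 in Hc. nra. }
  intros s. destruct (mvt_from_zero f df Hf s) as [c [Hcs Hc]].
  rewrite Hf0 in Hc. pose proof (Hsign c).
  destruct (Req_dec c 0) as [->|Hc0]; [rewrite Hdf0 in Hc; lra|].
  assert (0 < c * c) by (apply Rsqr_pos_lt, Hc0).
  nra.
Qed.

Section Hoeffding.

Variable p : R.
Hypothesis Hp : 0 <= p <= 1.

Let W s := 1 - p + p * exp s.

Let W_pos s : 0 < W s.
Proof. unfold W. pose proof (exp_pos s). nra. Qed.

Lemma hoeffding_lemma s : (1 - p) * exp (- p * s) + p * exp ((1 - p) * s) <= exp (s ^ 2 / 8).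
Proof.
  set (D := fun s => s ^ 2 / 8 + p * s - ln (W s)).
  set (dD := fun s => s / 4 + p - p * exp s / W s).
  set (d2D := fun s => / 4 - p * (1 - p) * exp s / W s ^ 2).
  assert (HD : 0 <= D s).
  { apply (convex_flat_nonneg D dD d2D).
    - intros x. pose proof (W_pos x). unfold D, dD, W in *. auto_derive; [lra|]. field. lra.
    - intros x. pose proof (W_pos x). unfold dD, d2D, W in *. auto_derive; [lra|]. field. lra.
    - intros x. pose proof (W_pos x). unfold d2D, W in *.
      replace (/ 4 - p * (1 - p) * exp x / (1 - p + p * exp x) ^ 2)
        with ((1 - p - p * exp x) ^ 2 / (4 * (1 - p + p * exp x) ^ 2)) by (field; lra).
      apply Rdiv_le_0_compat; [apply pow2_ge_0 | nra].
    - unfold D, W. rewrite exp_0. replace (1 - p + p * 1) with 1 by ring.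
      rewrite ln_1. field.
    - unfold dD, W. rewrite exp_0. replace (1 - p + p * 1) with 1 by ring. field. }
  replace ((1 - p) * exp (- p * s) + p * exp ((1 - p) * s)) with (exp (ln (W s) - p * s)).
  - apply exp_le_exp. unfold D in HD. lra.
  - unfold Rminus at 1. rewrite exp_plus, exp_ln by apply W_pos.
    replace ((1 - p) * s) with (s + - p * s) by ring. rewrite exp_plus.
    unfold W. replace (- (p * s)) with (- p * s) by ring. ring.
Qed.

End Hoeffding.

Lemma hoeffding_square f x : 0 <= f <= 1 ->
  (1 - f) * exp (2 * f ^ 2 - 2 * x ^ 2) + f * exp (2 * (1 - f) ^ 2 - 2 * (1 - x) ^ 2) <= 1.
Proof.
  intros Hf. set (s := 4 * (x - f)).
  replace (2 * f ^ 2 - 2 * x ^ 2) with (- f * s + - (s ^ 2 / 8)) by (unfold s; field).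
  replace (2 * (1 - f) ^ 2 - 2 * (1 - x) ^ 2) with ((1 - f) * s + - (s ^ 2 / 8)) by (unfold s; field).
  rewrite !exp_plus, exp_Ropp.
  pose proof (hoeffding_lemma f Hf s). pose proof (exp_pos (s ^ 2 / 8)).
  apply Rmult_le_reg_l with (exp (s ^ 2 / 8)); [lra|].
  replace (exp (s ^ 2 / 8) * ((1 - f) * (exp (- f * s) * / exp (s ^ 2 / 8))
                              + f * (exp ((1 - f) * s) * / exp (s ^ 2 / 8))))
    with ((1 - f) * exp (- f * s) + f * exp ((1 - f) * s)) by (field; lra).
  lra.
Qed.

Lemma filterlim_rsum {T} (F : (T -> Prop) -> Prop) {FF : Filter F} N (h : nat -> T -> R) l :
  (forall i, (i < N)%nat -> filterlim (h i) F (locally (l i))) ->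
  filterlim (fun t => rsum N (fun i => h i t)) F (locally (rsum N l)).
Proof.
  induction N as [|N IH]; intros Hh; simpl; [apply filterlim_const|].
  eapply (filterlim_comp_2 (fun t => rsum N (fun i => h i t)) (h N) Rplus).
  - apply IH; intros; apply Hh; lia.
  - apply Hh; lia.
  - exact (filterlim_plus (V := R_NormedModule) (rsum N l) (l N)).
Qed.

Lemma filterlim_comp_ex_derive {T} (F : (T -> Prop) -> Prop) {FF : Filter F} (phi : R -> R) h l :
  ex_derive phi l -> filterlim h F (locally l) -> filterlim (fun t => phi (h t)) F (locally (phi l)).
Proof.
  intros Hphi Hh. apply (filterlim_comp _ _ _ h phi _ _ _ Hh).
  apply (ex_derive_continuous (K := R_AbsRing) (V := R_NormedModule)), Hphi.
Qed.

Definition sqmix N q (x : nat -> R) : R :=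
  / 2 - / 4 * ln (mix_exp N q (fun i => -2 * x i ^ 2) / mix_exp N q (fun i => -2 * (1 - x i) ^ 2)).

Section SquareLossMixture.

Variables (N : nat) (q : nat -> R).
Hypothesis Hq : prob_vec N q.

Let A x := mix_exp N q (fun i => -2 * x i ^ 2).
Let B x := mix_exp N q (fun i => -2 * (1 - x i) ^ 2).

Let A_pos x : 0 < A x. Proof. now apply mix_exp_pos. Qed.
Let B_pos x : 0 < B x. Proof. now apply mix_exp_pos. Qed.

Lemma sqmix_bounds x : (forall i, (i < N)%nat -> 0 <= x i <= 1) -> 0 <= sqmix N q x <= 1.
Proof.
  intros Hx. pose proof (A_pos x) as HA. pose proof (B_pos x) as HB.
  assert (HAB : A x <= exp 2 * B x).
  { unfold A, B. rewrite <- mix_exp_shift. apply mix_exp_le; [exact Hq|].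
    intros i Hi. specialize (Hx i Hi). nra. }
  assert (HBA : exp (-2) * B x <= A x).
  { unfold A, B. rewrite <- mix_exp_shift. apply mix_exp_le; [exact Hq|].
    intros i Hi. specialize (Hx i Hi). nra. }
  assert (Hup : ln (A x / B x) <= 2).
  { apply ln_le_iff_le_exp; [now apply Rdiv_lt_0_compat|].
    apply Rmult_le_reg_r with (B x); [exact HB|]. field_simplify; lra. }
  assert (Hlo : -2 <= ln (A x / B x)).
  { rewrite <- (ln_exp (-2)). apply ln_le; [apply exp_pos|].
    apply Rmult_le_reg_r with (B x); [exact HB|]. field_simplify; lra. }
  unfold sqmix. fold (A x) (B x). lra.
Qed.

Lemma sqmix_balance x :
  exp (2 * sqmix N q x ^ 2) * A x = exp (2 * (1 - sqmix N q x) ^ 2) * B x.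
Proof.
  pose proof (A_pos x). pose proof (B_pos x).
  set (f := sqmix N q x).
  assert (Hratio : A x = exp (2 - 4 * f) * B x).
  { replace (2 - 4 * f) with (ln (A x / B x)) by (unfold f, sqmix; fold (A x) (B x); field).
    rewrite exp_ln by (now apply Rdiv_lt_0_compat). field. lra. }
  rewrite Hratio, <- Rmult_assoc, <- exp_plus. do 2 f_equal. ring.
Qed.

Lemma sqmix_mixable x h : (forall i, (i < N)%nat -> 0 <= x i <= 1) -> h = 0 \/ h = 1 ->
  mix_exp N q (fun i => -2 * (x i - h) ^ 2) <= exp (-2 * (sqmix N q x - h) ^ 2).
Proof.
  intros Hx Hh. pose proof (sqmix_bounds x Hx) as Hf. pose proof (sqmix_balance x) as Hbal.
  set (f := sqmix N q x) in *.
  set (K := exp (2 * f ^ 2) * A x).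
  (* K = (1 - f) K + f K, which termwise is Hoeffding's lemma *)
  assert (HK : K <= 1).
  { destruct Hq as [Hq0 Hq1].
    replace K with ((1 - f) * (exp (2 * f ^ 2) * A x) + f * (exp (2 * (1 - f) ^ 2) * B x))
      by (fold K; rewrite <- Hbal; fold K; ring).
    apply Rle_trans with (rsum N q); [|lra]. unfold A, B, mix_exp. rewrite <- !rsum_scal, <- rsum_plus.
    apply rsum_le; intros i Hi.
    pose proof (hoeffding_square f (x i) Hf) as Hhoef.
    replace (2 * f ^ 2 - 2 * x i ^ 2) with (2 * f ^ 2 + -2 * x i ^ 2) in Hhoef by ring.
    replace (2 * (1 - f) ^ 2 - 2 * (1 - x i) ^ 2) with (2 * (1 - f) ^ 2 + -2 * (1 - x i) ^ 2)
      in Hhoef by ring.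
    rewrite !exp_plus in Hhoef. pose proof (Hq0 i Hi). nra. }
  assert (Hexp : forall e y, 0 < y -> exp e * y <= 1 -> y <= exp (- e)).
  { intros e y Hy Hey. rewrite exp_Ropp. pose proof (exp_pos e).
    apply Rmult_le_reg_l with (exp e); [lra|]. field_simplify; lra. }
  destruct Hh as [-> | ->].
  - rewrite (mix_exp_ext _ _ _ (fun i => -2 * x i ^ 2)) by (intros; ring).
    replace (-2 * (f - 0) ^ 2) with (- (2 * f ^ 2)) by ring. apply Hexp; [apply A_pos | exact HK].
  - rewrite (mix_exp_ext _ _ _ (fun i => -2 * (1 - x i) ^ 2)) by (intros; ring).
    replace (-2 * (f - 1) ^ 2) with (- (2 * (1 - f) ^ 2)) by ring.
    apply Hexp; [apply B_pos|]. fold (B x). rewrite <- Hbal. exact HK.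
Qed.

Lemma sqmix_nondecreasing x y :
  (forall i, (i < N)%nat -> 0 <= x i <= y i /\ y i <= 1) -> sqmix N q x <= sqmix N q y.
Proof.
  intros Hxy. pose proof (A_pos x). pose proof (B_pos x). pose proof (A_pos y). pose proof (B_pos y).
  assert (HA : A y <= A x) by (apply mix_exp_le; [exact Hq|]; intros i Hi; specialize (Hxy i Hi); nra).
  assert (HB : B x <= B y) by (apply mix_exp_le; [exact Hq|]; intros i Hi; specialize (Hxy i Hi); nra).
  assert (ln (A y / B y) <= ln (A x / B x)).
  { apply ln_le; [now apply Rdiv_lt_0_compat|]. unfold Rdiv.
    apply Rmult_le_compat; try lra; [apply Rlt_le, Rinv_0_lt_compat; lra|].
    apply Rinv_le_contravar; lra. }
  unfold sqmix. fold (A x) (B x) (A y) (B y). lra.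
Qed.

Lemma sqmix_const x c : (forall i, (i < N)%nat -> x i = c) -> sqmix N q x = c.
Proof.
  intros Hx. unfold sqmix.
  rewrite (mix_exp_ext _ _ (fun i => -2 * x i ^ 2) (fun _ => -2 * c ^ 2)),
    (mix_exp_ext _ _ (fun i => -2 * (1 - x i) ^ 2) (fun _ => -2 * (1 - c) ^ 2))
    by (intros i Hi; rewrite (Hx i Hi); reflexivity).
  rewrite !mix_exp_const, ln_div, !ln_exp by (exact Hq || apply exp_pos).
  field.
Qed.

Lemma filterlim_sqmix {T} (F : (T -> Prop) -> Prop) {FF : Filter F} (x : nat -> T -> R) l :
  (forall i, (i < N)%nat -> filterlim (x i) F (locally (l i))) ->
  filterlim (fun t => sqmix N q (fun i => x i t)) F (locally (sqmix N q l)).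
Proof.
  intros Hx. pose proof (A_pos l). pose proof (B_pos l).
  assert (HA : filterlim (fun t => A (fun i => x i t)) F (locally (A l))).
  { apply (filterlim_rsum F N (fun i t => q i * exp (-2 * x i t ^ 2))). intros i Hi.
    apply (filterlim_comp_ex_derive F (fun v => q i * exp (-2 * v ^ 2))); [auto_derive|]; auto. }
  assert (HB : filterlim (fun t => / B (fun i => x i t)) F (locally (/ B l))).
  { apply (filterlim_comp_ex_derive F Rinv); [auto_derive; lra|].
    apply (filterlim_rsum F N (fun i t => q i * exp (-2 * (1 - x i t) ^ 2))). intros i Hi.
    apply (filterlim_comp_ex_derive F (fun v => q i * exp (-2 * (1 - v) ^ 2))); [auto_derive|]; auto. }
  apply (filterlim_comp_ex_derive F (fun v => / 2 - / 4 * ln v)).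
  - auto_derive. now apply Rdiv_lt_0_compat.
  - apply (filterlim_comp_2 _ _ Rmult HA HB), (filterlim_mult (K := R_AbsRing)).
Qed.

End SquareLossMixture.

Lemma ex_RInt_rsum N (h : nat -> R -> R) a b : (forall i, (i < N)%nat -> ex_RInt (h i) a b) ->
  ex_RInt (fun u => rsum N (fun i => h i u)) a b.
Proof.
  induction N as [|N IH]; intros Hh; simpl; [apply ex_RInt_const|].
  apply (ex_RInt_plus (V := R_NormedModule) (fun u => rsum N (fun i => h i u)) (h N)).
  - apply IH; intros; apply Hh; lia.
  - apply Hh; lia.
Qed.

Lemma ex_RInt_ext_open (f g : R -> R) a b : a <= b ->
  (forall u, a < u < b -> f u = g u) -> ex_RInt f a b -> ex_RInt g a b.
Proof.
  intros Hab Hfg. apply ex_RInt_ext. intros u Hu.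
  rewrite Rmin_left, Rmax_right in Hu by lra. now apply Hfg.
Qed.

Lemma ex_RInt_upset_indicator (P : R -> Prop) (Pdec : forall u, {P u} + {~ P u}) a b :
  (forall u v, P u -> u <= v -> P v) -> a <= b ->
  ex_RInt (fun u => if Pdec u then 1 else 0) a b.
Proof.
  intros Hup Hab.
  (* the indicator jumps from 0 to 1 at the supremum c of the points of [a, b] outside P *)
  set (E := fun u => u = a \/ (a <= u <= b /\ ~ P u)).
  destruct (completeness E) as [c [Hub Hlub]].
  { exists b. intros u [->|[Hu _]]; lra. }
  { exists a. now left. }
  assert (Hac : a <= c) by (apply Hub; now left).
  assert (Hcb : c <= b) by (apply Hlub; intros u [->|[Hu _]]; lra).
  apply ex_RInt_Chasles with c.
  - apply (ex_RInt_ext_open (fun _ => 0)); [exact Hac| |apply ex_RInt_const].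
    intros u Hu. destruct (Pdec u) as [HP|]; [exfalso|reflexivity].
    assert (c <= u); [|lra].
    apply Hlub. intros e [->|[He HnP]]; [lra|].
    destruct (Rle_or_lt e u) as [|Hue]; [assumption|].
    exfalso. apply HnP, (Hup u); [exact HP | lra].
  - apply (ex_RInt_ext_open (fun _ => 1)); [exact Hcb| |apply ex_RInt_const].
    intros u Hu. destruct (Pdec u) as [|HnP]; [reflexivity|exfalso].
    assert (u <= c) by (apply Hub; right; split; [lra|exact HnP]). lra.
Qed.

Definition count_below N y : R := rsum N (fun k => if Rle_dec (INR (S k)) y then 1 else 0).

Lemma count_below_full N y : INR N <= y -> count_below N y = INR N.
Proof.
  induction N as [|N IH]; intros Hy; [reflexivity|].
  unfold count_below in *. cbn [rsum]. rewrite S_INR in *.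
  rewrite IH by lra. destruct (Rle_dec _ _); [ring|lra].
Qed.

Lemma count_below_bounds N y : 0 <= y <= INR N -> y - 1 < count_below N y <= y.
Proof.
  induction N as [|N IH]; intros Hy.
  - simpl in Hy. unfold count_below. simpl. lra.
  - destruct (Rle_dec (INR (S N)) y) as [Hfull|Hpart].
    + rewrite count_below_full by exact Hfull. lra.
    + unfold count_below in *. cbn [rsum]. rewrite S_INR in *.
      destruct (Rle_dec _ _); [lra|rewrite Rplus_0_r].
      destruct (Rle_or_lt y (INR N)) as [Hle|Hgt]; [now apply IH|].
      fold (count_below N y). rewrite count_below_full by lra. lra.
Qed.

Lemma ex_RInt_nondecreasing_unit (G : R -> R) a b :
  (forall u v, u <= v -> G u <= G v) -> (forall u, 0 <= G u <= 1) -> a <= b -> ex_RInt G a b.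
Proof.
  intros Hmono Hbound Hab.
  (* G is the uniform limit of the staircase functions count_below n (n G) / n *)
  set (s := fun (n : nat) u => / INR (S n) * count_below (S n) (INR (S n) * G u)).
  assert (Hs : forall n, ex_RInt (s n) a b).
  { intros n. apply (ex_RInt_scal (V := R_NormedModule)).
    apply (ex_RInt_rsum (S n) (fun k u => if Rle_dec (INR (S k)) (INR (S n) * G u) then 1 else 0)).
    intros k _. apply (ex_RInt_upset_indicator (fun u => INR (S k) <= INR (S n) * G u)); [|exact Hab].
    intros u v Hu Huv. apply Rle_trans with (1 := Hu).
    apply Rmult_le_compat_l; [apply pos_INR | now apply Hmono]. }
  destruct (filterlim_RInt (V := R_CompleteNormedModule) s a b eventually _
              (G : fct_UniformSpace R R_UniformSpace) (fun n => RInt (s n) a b))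
    as [I [_ HI]]; [intros n; now apply RInt_correct | | now exists I].
  apply filterlim_locally. intros eps.
  destruct (nfloor_ex (/ eps)) as [n0 Hn0]; [apply Rlt_le, Rinv_0_lt_compat, cond_pos|].
  exists n0. intros n Hn t. change (Rabs (s n t - G t) < eps).
  pose proof (cond_pos eps). pose proof (Hbound t).
  assert (Hn1 : 0 < INR (S n)) by (apply lt_0_INR; lia).
  assert (Hsmall : / INR (S n) < eps).
  { rewrite <- (Rinv_inv eps). apply Rinv_lt_contravar.
    - apply Rmult_lt_0_compat; [now apply Rinv_0_lt_compat | exact Hn1].
    - apply le_INR in Hn. rewrite S_INR. lra. }
  pose proof (count_below_bounds (S n) (INR (S n) * G t)) as Hcount.
  unfold s. set (c := count_below (S n) (INR (S n) * G t)) in *.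
  replace (/ INR (S n) * c - G t) with (/ INR (S n) * (c - INR (S n) * G t)) by (field; lra).
  rewrite Rabs_mult, Rabs_right by (apply Rle_ge, Rlt_le, Rinv_0_lt_compat; lra).
  apply Rle_lt_trans with (/ INR (S n) * 1); [|lra].
  apply Rmult_le_compat_l; [apply Rlt_le, Rinv_0_lt_compat; lra|].
  apply Rabs_le. destruct Hcount; [nra|lra].
Qed.

Lemma ex_RInt_nondecreasing (G : R -> R) a b : a <= b ->
  (forall u v, a <= u -> u <= v -> v <= b -> G u <= G v) ->
  (forall u, a <= u <= b -> 0 <= G u <= 1) -> ex_RInt G a b.
Proof.
  intros Hab Hmono Hbound.
  set (clamp := fun u => Rmax a (Rmin b u)).
  assert (Hclamp : forall u, a <= clamp u <= b)
    by (intros; unfold clamp, Rmax, Rmin; repeat destruct Rle_dec; lra).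
  apply (ex_RInt_ext_open (fun u => G (clamp u))); [exact Hab| |].
  - intros u Hu. f_equal.
    unfold clamp, Rmax, Rmin. repeat destruct Rle_dec; lra.
  - apply ex_RInt_nondecreasing_unit; [|intros; now apply Hbound|exact Hab].
    intros u v Huv. pose proof (Hclamp u). pose proof (Hclamp v).
    apply Hmono; try lra. unfold clamp, Rmax, Rmin. repeat destruct Rle_dec; lra.
Qed.

Lemma ex_RInt_affine (f : R -> R) al be a b : ex_RInt f a b -> ex_RInt (fun u => al * f u + be) a b.
Proof.
  intros Hf. apply (ex_RInt_plus (V := R_NormedModule) (fun u => al * f u) (fun _ => be)).
  - exact (ex_RInt_scal (V := R_NormedModule) f a b al Hf).
  - apply ex_RInt_const.
Qed.

Lemma RInt_affine (f : R -> R) al be a b : ex_RInt f a b ->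
  RInt (fun u => al * f u + be) a b = al * RInt f a b + be * (b - a).
Proof.
  intros Hf. rewrite (RInt_plus (V := R_CompleteNormedModule) (fun u => al * f u) (fun _ => be)).
  - assert (Hscal : RInt (fun u => al * f u) a b = al * RInt f a b)
      by exact (RInt_scal (V := R_CompleteNormedModule) f a b al Hf).
    rewrite Hscal, RInt_const.
    change (al * RInt f a b + (b - a) * be = al * RInt f a b + be * (b - a)). ring.
  - exact (ex_RInt_scal (V := R_NormedModule) f a b al Hf).
  - apply ex_RInt_const.
Qed.

Lemma RInt_rsum N (h : nat -> R -> R) a b : (forall i, (i < N)%nat -> ex_RInt (h i) a b) ->
  RInt (fun u => rsum N (fun i => h i u)) a b = rsum N (fun i => RInt (h i) a b).
Proof.
  induction N as [|N IH]; intros Hh; simpl.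
  - rewrite RInt_const. apply Rmult_0_r.
  - rewrite (RInt_plus (V := R_CompleteNormedModule) (fun u => rsum N (fun i => h i u)) (h N)).
    + rewrite IH by (intros; apply Hh; lia). reflexivity.
    + apply ex_RInt_rsum; intros; apply Hh; lia.
    + apply Hh; lia.
Qed.

Lemma mix_exp_RInt_le a b N q (h : nat -> R -> R) (phi : R -> R) :
  a < b -> prob_vec N q -> (forall i, (i < N)%nat -> ex_RInt (h i) a b) -> ex_RInt phi a b ->
  (forall u, a < u < b -> mix_exp N q (fun i => h i u) <= exp (phi u)) ->
  mix_exp N q (fun i => RInt (h i) a b / (b - a)) <= exp (RInt phi a b / (b - a)).
Proof.
  intros Hab Hq Hh Hphi Hpt.
  set (c := fun i => RInt (h i) a b / (b - a)).
  set (S := mix_exp N q c). assert (HS : 0 < S) by now apply mix_exp_pos.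
  set (p := fun i => q i * exp (c i) / S).
  (* the tangent plane of z |-> ln (mix_exp N q z) at c, integrated over [a, b] *)
  set (tangent := fun u => 1 * rsum N (fun i => p i * h i u + - (p i * c i)) + ln S).
  assert (Hle : forall u, a < u < b -> tangent u <= phi u).
  { intros u Hu. unfold tangent.
    rewrite (rsum_ext N _ (fun i => p i * (h i u - c i))) by (intros; ring).
    pose proof (ln_mix_exp_tangent N q c (fun i => h i u) (proj1 Hq) HS) as Htan.
    assert (Hln : ln (mix_exp N q (fun i => h i u)) <= phi u)
      by (apply ln_le_iff_le_exp; [apply mix_exp_pos, Hq | now apply Hpt]).
    change (ln S + rsum N (fun i => p i * (h i u - c i)) <= ln (mix_exp N q (fun i => h i u)))
      in Htan.
    lra. }
  assert (Hex : forall i, (i < N)%nat -> ex_RInt (fun u => p i * h i u + - (p i * c i)) a b)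
    by (intros; apply ex_RInt_affine; auto).
  assert (Hint : RInt tangent a b = (b - a) * ln S).
  { unfold tangent. rewrite RInt_affine by (now apply ex_RInt_rsum).
    rewrite (RInt_rsum N (fun i u => p i * h i u + - (p i * c i))) by exact Hex.
    rewrite (rsum_ext N _ (fun i => 0 * p i)), rsum_scal.
    - change (1 * (0 * rsum N p) + ln S * (b - a) = (b - a) * ln S). ring.
    - intros i Hi. rewrite RInt_affine by auto. unfold c. field. lra. }
  assert (Hmean : (b - a) * ln S <= RInt phi a b).
  { rewrite <- Hint. apply RInt_le; [lra| |exact Hphi|exact Hle].
    apply ex_RInt_affine, ex_RInt_rsum, Hex. }
  apply ln_le_iff_le_exp; [exact HS|].
  apply Rmult_le_reg_l with (b - a); [lra|]. field_simplify; lra.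
Qed.

Lemma Heav_neg x : x < 0 -> Heav x = 0.
Proof. unfold Heav. destruct Rlt_dec; lra. Qed.

Lemma Heav_nonneg x : 0 <= x -> Heav x = 1.
Proof. unfold Heav. destruct Rlt_dec; lra. Qed.

Lemma Heav_binary x : Heav x = 0 \/ Heav x = 1.
Proof. unfold Heav. destruct Rlt_dec; auto. Qed.

Lemma ex_RInt_crps a b F y : is_pdf a b F -> a <= y <= b ->
  ex_RInt (fun u => (F u - Heav (u - y)) ^ 2) a b.
Proof.
  intros [Hbound [Hmono _]] Hy.
  apply ex_RInt_Chasles with y.
  - apply (ex_RInt_ext_open (fun u => F u ^ 2)); [lra| |].
    + intros u Hu. rewrite Heav_neg by lra. ring.
    + apply ex_RInt_nondecreasing; [lra| |].
      * intros u v Hu Huv Hv. pose proof (Hbound u ltac:(lra)).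
        pose proof (Hmono u v Hu Huv ltac:(lra)). apply pow_incr; lra.
      * intros u Hu. pose proof (Hbound u ltac:(lra)). split; [apply pow2_ge_0|nra].
  - apply (ex_RInt_ext_open (fun u => -1 * (1 - (1 - F u) ^ 2) + 1)); [lra| |].
    + intros u Hu. rewrite Heav_nonneg by lra. ring.
    + apply ex_RInt_affine, ex_RInt_nondecreasing; [lra| |].
      * intros u v Hu Huv Hv. pose proof (Hbound v ltac:(lra)).
        pose proof (Hmono u v ltac:(lra) Huv Hv). nra.
      * intros u Hu. pose proof (Hbound u ltac:(lra)). nra.
Qed.

Lemma Fmix_is_pdf a b N q Fs : prob_vec N q -> (forall i, (i < N)%nat -> is_pdf a b (Fs i)) ->
  is_pdf a b (Fmix N q Fs).
Proof.
  intros Hq HF. change (Fmix N q Fs) with (fun u => sqmix N q (fun i => Fs i u)).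
  repeat split.
  - apply sqmix_bounds; [exact Hq|]. intros i Hi. now apply (HF i Hi).
  - apply sqmix_bounds; [exact Hq|]. intros i Hi. now apply (HF i Hi).
  - intros u v Hu Huv Hv. apply sqmix_nondecreasing; [exact Hq|]. intros i Hi.
    destruct (HF i Hi) as [Hbound [Hmono _]].
    pose proof (Hbound u ltac:(lra)). pose proof (Hbound v ltac:(lra)).
    pose proof (Hmono u v Hu Huv Hv). lra.
  - apply sqmix_const; [exact Hq|]. intros i Hi. apply (HF i Hi).
  - apply sqmix_const; [exact Hq|]. intros i Hi. apply (HF i Hi).
  - intros x Hx. apply (filterlim_sqmix N q Hq (at_left x)). intros i Hi. now apply (HF i Hi).
  - intros x Hx.
    destruct (choice (fun i l => (i < N)%nat -> filterlim (Fs i) (at_right x) (locally l)))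
      as [l Hl].
    { intros i. destruct (Compare_dec.lt_dec i N) as [Hi|Hi].
      - destruct (HF i Hi) as [_ [_ [_ [_ [_ Hright]]]]]. destruct (Hright x Hx) as [l Hl].
        now exists l.
      - exists 0. intros. contradiction. }
    exists (sqmix N q l). now apply (filterlim_sqmix N q Hq (at_right x)).
Qed.

Lemma crps_Fmix_mixable a b N q Fs y : a < b -> prob_vec N q ->
  (forall i, (i < N)%nat -> is_pdf a b (Fs i)) -> a <= y <= b ->
  mix_exp N q (fun i => - (2 / (b - a)) * CRPS a b (Fs i) y)
  <= exp (- (2 / (b - a)) * CRPS a b (Fmix N q Fs) y).
Proof.
  intros Hab Hq HF Hy.
  assert (Hscal : forall g, ex_RInt g a b ->
    RInt (fun u => -2 * g u) a b / (b - a) = - (2 / (b - a)) * RInt g a b).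
  { intros g Hg.
    assert (HRInt : RInt (fun u => -2 * g u) a b = -2 * RInt g a b)
      by exact (RInt_scal (V := R_CompleteNormedModule) g a b (-2) Hg).
    rewrite HRInt. field. lra. }
  pose proof (mix_exp_RInt_le a b N q (fun i u => -2 * (Fs i u - Heav (u - y)) ^ 2)
                (fun u => -2 * (Fmix N q Fs u - Heav (u - y)) ^ 2)) as Hmix.
  cbv beta in Hmix.
  rewrite Hscal in Hmix by (apply ex_RInt_crps; [now apply Fmix_is_pdf | exact Hy]).
  rewrite (mix_exp_ext _ _ _ (fun i => - (2 / (b - a)) * CRPS a b (Fs i) y)) in Hmix.
  - apply Hmix; [exact Hab|exact Hq| | |].
    + intros i Hi. apply (ex_RInt_scal (V := R_NormedModule)), ex_RInt_crps; auto.
    + apply (ex_RInt_scal (V := R_NormedModule)), ex_RInt_crps; [now apply Fmix_is_pdf | exact Hy].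
    + intros u Hu. apply (sqmix_mixable N q Hq (fun i => Fs i u)); [|apply Heav_binary].
      intros i Hi. apply (HF i Hi). lra.
  - intros i Hi. apply Hscal, ex_RInt_crps; auto.
Qed.

Lemma le_neg_inv_ln eta x S : 0 < eta -> 0 < S -> S <= exp (- eta * x) -> x <= - / eta * ln S.
Proof.
  intros Heta HS HSx. apply ln_le_iff_le_exp in HSx; [|exact HS].
  apply Rmult_le_reg_l with eta; [exact Heta|].
  replace (eta * (- / eta * ln S)) with (- ln S) by (field; lra). nra.
Qed.

Theorem theorem2 (a b : R) (hab : a < b) :
  mixable (is_pdf a b) (fun y => a <= y <= b) (CRPS a b) (2 / (b - a)) /\
  (forall (N : nat) (Fs : nat -> R -> R) (q : nat -> R),
     (1 <= N)%nat ->
     (forall i, (i < N)%nat -> is_pdf a b (Fs i)) ->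
     prob_vec N q ->
     is_pdf a b (Fmix N q Fs) /\
     forall y, a <= y <= b ->
       exp (- (2 / (b - a)) * CRPS a b (Fmix N q Fs) y)
       >= rsum N (fun i => q i * exp (- (2 / (b - a)) * CRPS a b (Fs i) y))).
Proof.
  assert (Heta : 0 < 2 / (b - a)) by (apply Rdiv_lt_0_compat; lra).
  split.
  - intros N q Fs Hq HF. exists (Fmix N q Fs). split; [now apply Fmix_is_pdf|].
    intros y Hy. apply le_neg_inv_ln; [exact Heta | now apply mix_exp_pos |].
    now apply crps_Fmix_mixable.
  - intros N Fs q _ HF Hq. split; [now apply Fmix_is_pdf|].
    intros y Hy. apply Rle_ge. now apply crps_Fmix_mixable.
Qed.
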